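(* Let $\Gamma$ be a finite alphabet and $n\ge2$, and fix a bijection between $\Gamma^{n-1}$ and $\{1,\dots,|\Gamma|^{n-1}\}$ giving one-hot encodings $\mathbb 1(g_1\cdots g_{n-1})\in\{0,1\}^{|\Gamma|^{n-1}}$. There exists a function $F=M\circ N$, where $N(a)=a/\|a\|_1$ and $M$ is a ReLU MLP, such that for every string $w=w_1\cdots w_T\in\Gamma^T$ and every $s$ with $n-1\le s\le T$, $$F(A_s)=\mathbb 1(w_{s-n+2}\cdots w_s),$$ the one-hot encoding of the last $n-1$ symbols up to position $s$.
   Context: Let $\mathbb 1(g)\in\{0,1\}^{|\Gamma|}$ be the one-hot encoding of $g\in\Gamma$, and for $n-1\le s\le T$ let $A_s=\frac{1}{n-1}\sum_{j=s-n+2}^{s}10^{-j}\mathbb 1(w_j)$ (the output at position $s$ of a single hard-attention head that attends uniformly to the last $n-1$ positions with values $10^{-j}\mathbb 1(w_j)$). A ReLU MLP with $k$ hidden layers is a map $x\mapsto W_{k+1}\,\mathrm{ReLU}(W_k\cdots\mathrm{ReLU}(W_1x+b_1)\cdots+b_k)+b_{k+1}$ with real matrices $W_i$ and vectors $b_i$, where $\mathrm{ReLU}$ acts entrywise as $\max(0,\cdot)$. *)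

From HB Require Import structures.
From mathcomp Require Import all_boot all_order all_algebra.
From mathcomp Require Import reals.
Set Implicit Arguments. Unset Strict Implicit. Unset Printing Implicit Defensive.
Import Order.TTheory GRing.Theory Num.Theory.
Local Open Scope ring_scope.

Section Defs.
Variable R : realType.

Definition relu {m} (x : 'cV[R]_m) : 'cV[R]_m := map_mx (fun t => Num.max t 0) x.

Inductive mlp : nat -> nat -> Type :=
| mlp_one a h b : 'M[R]_(h, a) -> 'cV[R]_h -> 'M[R]_(b, h) -> 'cV[R]_b -> mlp a b
| mlp_cons a h b : 'M[R]_(h, a) -> 'cV[R]_h -> mlp h b -> mlp a b.

Fixpoint mlp_eval a b (M : mlp a b) : 'cV[R]_a -> 'cV[R]_b :=
  match M in mlp a b return 'cV[R]_a -> 'cV[R]_b with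
  | mlp_one _ _ _ W1 b1 W2 b2 => fun x => W2 *m relu (W1 *m x + b1) + b2
  | mlp_cons _ _ _ W c M' => fun x => mlp_eval M' (relu (W *m x + c))
  end.

Definition l1norm {m} (x : 'cV[R]_m) : R := \sum_i `|x i 0|.
Definition l1normalize {m} (x : 'cV[R]_m) : 'cV[R]_m := (l1norm x)^-1 *: x.

Definition onehot {m} (i : 'I_m) : 'cV[R]_m := \col_j (j == i)%:R.

Definition onehotG (Gamma : finType) (g : Gamma) : 'cV[R]_#|Gamma| :=
  onehot (enum_rank g).

(* A_s for w = w_1 ... w_T (w_j = tnth w (j-1), i.e. 0-based index i = j-1):
   A_s = 1/(n-1) * sum_{j=s-n+2}^{s} 10^{-j} 1(w_j). *)
Definition attnA (Gamma : finType) (n T : nat) (w : T.-tuple Gamma) (s : nat)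
  : 'cV[R]_#|Gamma| :=
  (n.-1)%:R^-1 *: \sum_(i < T | (s.+2 - n <= i.+1 <= s)%N)
      ((10%:R : R) ^- i.+1) *: onehotG (tnth w i).

End Defs.

(* The attention output A_s is a positive multiple of the "decimal code"
   sum_k 10^-k 1(u_k) of the window u = w_{s-n+2} ... w_s; since the l1 norm of
   a decimal code depends only on the length of the word, normalisation maps
   A_s to a point depending on u alone.  Decimal codes of distinct words of equal
   length are distinct: every coordinate is below 2, so the first letter is the
   unique coordinate that is at least 1.  It remains to realise an arbitrary
   function on a finite set of distinct points c_u by a ReLU network: a first
   layer computes relu(x_g - c_u g) and relu(c_u g - x_g), whose sum is
   |x_g - c_u g|; a second computes relu(1 - C |x - c_u|_1), which on the point
   set is the indicator of c_u once C |c_u - c_v|_1 >= 1 for all u <> v; a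
   linear output layer then selects the prescribed values. *)

From HB Require Import structures.
From mathcomp Require Import all_boot all_order all_algebra.
From mathcomp Require Import reals lra zify.
Set Implicit Arguments.
Unset Strict Implicit.
Unset Printing Implicit Defensive.
Import Order.TTheory GRing.Theory Num.Theory.
Local Open Scope ring_scope.

Section L1Norm.
Variable R : realType.

Lemma maxr0_addN (y : R) : Num.max y 0 + Num.max (- y) 0 = `|y|.
Proof.
case: (ger0P y) => y0; case: (ger0P (- y)) => y0'.
all: rewrite ?addr0 ?add0r //; lra.
Qed.

Lemma l1norm_ge0 m (x : 'cV[R]_m) : 0 <= l1norm x.
Proof. exact: sumr_ge0. Qed.

Lemma l1norm_eq0 m (x : 'cV[R]_m) : l1norm x = 0 -> x = 0.
Proof.
move=> /psumr_eq0P x0; apply/matrixP => i j; rewrite (ord1 j) mxE.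
by apply/eqP; rewrite -normr_eq0 x0.
Qed.

Lemma l1normZ m (c : R) (x : 'cV[R]_m) : l1norm (c *: x) = `|c| * l1norm x.
Proof. by rewrite mulr_sumr; apply: eq_bigr => i _; rewrite mxE normrM. Qed.

Lemma l1normalizeZ m (c : R) (x : 'cV[R]_m) :
  0 < c -> l1normalize (c *: x) = l1normalize x.
Proof.
move=> c_gt0; rewrite /l1normalize l1normZ gtr0_norm // scalerA invfM.
by rewrite mulrAC mulVf ?mul1r // gt_eqF.
Qed.

End L1Norm.

Section Interpolation.
Variables (R : realType) (U : finType) (a b : nat) (c : U -> 'cV[R]_a).
Hypothesis c_inj : injective c.

Local Notation hidden := (U * 'I_a * bool)%type.

Definition absdev_weight : 'M[R]_(#|{: hidden}|, a) :=
  \matrix_(i < #|{: hidden}|, k < a)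
    ((-1) ^+ (enum_val i).2 * (k == (enum_val i).1.2)%:R).

Definition absdev_bias : 'cV[R]_#|{: hidden}| :=
  \col_(i < #|{: hidden}|)
    (- ((-1) ^+ (enum_val i).2 * c (enum_val i).1.1 (enum_val i).1.2 0)).

Definition absdev_layer (x : 'cV[R]_a) := relu (absdev_weight *m x + absdev_bias).

Lemma absdev_layerE x t :
  absdev_layer x (enum_rank t) 0 =
  Num.max ((-1) ^+ t.2 * (x t.1.2 0 - c t.1.1 t.1.2 0)) 0.
Proof.
rewrite !mxE enum_rankK; under eq_bigr do rewrite mxE enum_rankK.
rewrite (bigD1 t.1.2) //= eqxx big1 => [|k /negbTE ->]; last by rewrite mulr0 mul0r.
by rewrite mulr1 addr0 mulrBr.
Qed.

Definition separation : R :=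
  \sum_(p : U * U | p.1 != p.2) (l1norm (c p.1 - c p.2))^-1.

Lemma separation_ge u v : u != v -> 1 <= separation * l1norm (c u - c v).
Proof.
move=> uv; have d_gt0 : 0 < l1norm (c u - c v).
  rewrite lt_def l1norm_ge0 andbT; apply: contra uv => /eqP /l1norm_eq0.
  by move=> /subr0_eq /c_inj ->.
rewrite -(mulVf (lt0r_neq0 d_gt0)) ler_pM2r // /separation (bigD1 (u, v)) //= lerDl.
by apply: sumr_ge0 => p _; rewrite invr_ge0 l1norm_ge0.
Qed.

Definition bump_weight : 'M[R]_(#|U|, #|{: hidden}|) :=
  \matrix_(i < #|U|, j < #|{: hidden}|)
    (- separation * ((enum_val j).1.1 == enum_val i)%:R).

Definition bump_layer (x : 'cV[R]_a) :=
  relu (bump_weight *m absdev_layer x + const_mx 1).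

Lemma bump_layerE x v :
  bump_layer x (enum_rank v) 0 = Num.max (1 - separation * l1norm (x - c v)) 0.
Proof.
rewrite !mxE addrC -mulNr; congr (Num.max (_ + _) 0).
rewrite (reindex (@enum_rank _)) /=; last exact/onW_bij/enum_rank_bij.
transitivity (\sum_(u : U) \sum_(g : 'I_a) \sum_(e : bool)
    - separation * (u == v)%:R * Num.max ((-1) ^+ e * (x g 0 - c u g 0)) 0).
  rewrite pair_bigA pair_bigA /=; apply: eq_bigr => -[[u g] e] _.
  by rewrite mxE !enum_rankK absdev_layerE.
rewrite (bigD1 v) //= [X in _ + X]big1 ?addr0 => [|u /negbTE ->]; last first.
  by rewrite big1 // => g _; rewrite big1 // => e _; rewrite mulr0 mul0r.
rewrite /l1norm mulr_sumr; apply: eq_bigr => g _.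
by rewrite big_bool /= eqxx mulr1 -mulrDr expr1 mulN1r expr0 mul1r addrC maxr0_addN !mxE.
Qed.

Lemma bump_layer_center u v : bump_layer (c u) (enum_rank v) 0 = (u == v)%:R.
Proof.
rewrite bump_layerE maxElt; have [<-|uv] := eqVneq u v.
  have -> : l1norm (c u - c u) = 0 by rewrite subrr; apply: big1 => i _; rewrite mxE normr0.
  by rewrite mulr0 subr0 ltr10.
case: ltP => // h; apply/eqP.
by rewrite eq_le h andbT subr_le0 separation_ge.
Qed.

Definition select_weight (out : U -> 'cV[R]_b) : 'M[R]_(b, #|U|) :=
  \matrix_(j < b, i < #|U|) out (enum_val i) j 0.

Theorem mlp_interpolate (out : U -> 'cV[R]_b) :
  exists M : mlp R a b, forall u, mlp_eval M (c u) = out u.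
Proof.
exists (mlp_cons absdev_weight absdev_bias
          (mlp_one bump_weight (const_mx 1) (select_weight out) 0)).
move=> u; apply/matrixP => j k; rewrite (ord1 k) /= addr0 mxE.
rewrite (reindex (@enum_rank _)) /=; last exact/onW_bij/enum_rank_bij.
under eq_bigr do rewrite mxE enum_rankK [relu _ _ _]bump_layer_center.
rewrite (bigD1 u) //= eqxx mulr1 big1 ?addr0 // => v.
by rewrite eq_sym => /negbTE ->; rewrite mulr0.
Qed.

End Interpolation.

Section DecimalCode.
Variables (R : realType) (Gamma : finType).

Definition decimal_code (s : seq Gamma) : 'cV[R]_#|Gamma| :=
  foldr (fun g v => onehotG R g + 10%:R^-1 *: v) 0 s.

Lemma decimal_code_consE g s i :
  decimal_code (g :: s) i 0 =
  (i == enum_rank g)%:R + 10%:R^-1 * decimal_code s i 0.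
Proof. by rewrite /= !mxE. Qed.

Lemma decimal_code_ge0 s i : 0 <= decimal_code s i 0.
Proof.
elim: s => [|g s IH]; first by rewrite mxE.
by rewrite decimal_code_consE addr_ge0 // mulr_ge0 // invr_ge0 ler0n.
Qed.

Lemma decimal_code_tail_lt1 s i : 10%:R^-1 * decimal_code s i 0 < 1.
Proof.
rewrite ltr_pdivrMl ?ltr0n // mulr1; elim: s => [|g s IH]; first by rewrite mxE.
rewrite decimal_code_consE; apply: (@lt_le_trans _ _ (1 + 1)); last lra.
apply: ler_ltD; first by case: (_ == _); rewrite ?ler01.
by rewrite ltr_pdivrMl ?ltr0n // mulr1.
Qed.

Lemma decimal_code_inj s s' :
  size s = size s' -> decimal_code s = decimal_code s' -> s = s'.
Proof.
elim: s s' => [|g s IH] [|g' s'] //= [size_eq] code_eq.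
have coordE i : decimal_code (g :: s) i 0 = decimal_code (g' :: s') i 0.
  by rewrite [decimal_code (g :: s)]code_eq.
have g_eq : g = g'.
  apply/eqP; apply: contraT => /negbTE gg'; have := coordE (enum_rank g).
  rewrite !decimal_code_consE eqxx (inj_eq enum_rank_inj) gg'.
  have := decimal_code_tail_lt1 s' (enum_rank g).
  have : 0 <= 10%:R^-1 * decimal_code s (enum_rank g) 0 :> R.
    by rewrite mulr_ge0 ?decimal_code_ge0 // invr_ge0 ler0n.
  move=> /= t_ge0 t'_lt1 coord_eq; exfalso; clear -t_ge0 t'_lt1 coord_eq; lra.
rewrite g_eq (IH s') //; apply/matrixP => i k; rewrite (ord1 k).
have := coordE i; rewrite !decimal_code_consE g_eq => /addrI /mulfI -> //.
by rewrite invr_eq0 pnatr_eq0.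
Qed.

Lemma l1norm_decimal_code_cons g s :
  l1norm (decimal_code (g :: s)) = 1 + 10%:R^-1 * l1norm (decimal_code s).
Proof.
have normE t : l1norm (decimal_code t) = \sum_i decimal_code t i 0.
  by apply: eq_bigr => i _; rewrite ger0_norm ?decimal_code_ge0.
rewrite !normE; under eq_bigr do rewrite decimal_code_consE.
rewrite big_split /= mulr_sumr; congr (_ + _).
by rewrite (bigD1 (enum_rank g)) //= eqxx big1 ?addr0 // => i /negbTE ->.
Qed.

Lemma l1norm_decimal_code_size s s' :
  size s = size s' -> l1norm (decimal_code s) = l1norm (decimal_code s').
Proof.
elim: s s' => [|g s IH] [|g' s'] //= [size_eq].
by rewrite !l1norm_decimal_code_cons (IH s').
Qed.

Lemma l1norm_decimal_code_gt0 s : s != [::] -> 0 < l1norm (decimal_code s).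
Proof.
case: s => [//|g s _]; rewrite l1norm_decimal_code_cons ltr_pwDl //.
by rewrite mulr_ge0 ?l1norm_ge0 // invr_ge0 ler0n.
Qed.

Lemma l1normalize_decimal_code_inj s s' : size s = size s' ->
  l1normalize (decimal_code s) = l1normalize (decimal_code s') -> s = s'.
Proof.
move=> size_eq; have [s0|s_neq0] := eqVneq s [::].
  by move: size_eq; rewrite s0; case: s'.
rewrite /l1normalize (l1norm_decimal_code_size size_eq) => /scalerI code_eq.
apply: (decimal_code_inj size_eq); apply: code_eq.
by rewrite invr_eq0 -(l1norm_decimal_code_size size_eq) lt0r_neq0 ?l1norm_decimal_code_gt0.
Qed.

Lemma decimal_code_sum x0 s :
  decimal_code s = \sum_(0 <= k < size s) (10%:R^-1 : R) ^+ k *: onehotG R (nth x0 s k).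
Proof.
elim: s => [|g s IH]; first by rewrite big_geq.
rewrite big_nat_recl //= expr0 scale1r IH scaler_sumr; congr (_ + _).
by apply: eq_bigr => k _; rewrite scalerA exprS.
Qed.

Lemma attnA_window n T (w : T.-tuple Gamma) s :
  (2 <= n)%N -> (n.-1 <= s)%N -> (s <= T)%N ->
  attnA R n w s = ((n.-1)%:R^-1 * 10%:R ^- (s.+2 - n)) *:
                  decimal_code (take n.-1 (drop (s.+1 - n) w)).
Proof.
move=> n_ge2 n_le_s s_le_T; set a := (s.+1 - n)%N.
have T_gt0 : (0 < T)%N by lia.
pose x0 := tnth w (Ordinal T_gt0).
rewrite /attnA -scalerA; congr (_ *: _).
under eq_bigr do rewrite (tnth_nth x0).
rewrite -(big_mkord (fun i => s.+2 - n <= i.+1 <= s)%N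
                    (fun i => 10%:R ^- i.+1 *: onehotG R (nth x0 w i))).
rewrite (eq_bigl (fun i => (true && (a <= i)) && (i < s))%N) => [|i]; last first.
  by apply/idP/idP => /andP[? ?]; apply/andP; split; lia.
rewrite -big_nat_widen // -(big_nat_widenl _ _ _ xpredT) ?leq0n //.
rewrite -[a]add0n big_addn add0n.
have size_window : size (take n.-1 (drop a w)) = n.-1.
  by rewrite size_takel // size_drop size_tuple; lia.
rewrite (decimal_code_sum x0) size_window scaler_sumr (_ : s - a = n.-1)%N; last lia.
apply: eq_big_nat => k /andP[_ k_lt]; rewrite scalerA -!exprVn -exprD nth_take // nth_drop.
congr ((_ ^+ _) *: onehotG R (nth x0 w _)); lia.
Qed.

End DecimalCode.

Theorem lemmaB12 (R : realType) (Gamma : finType) (n : nat) (hn : (2 <= n)%N)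
  (enc : (n.-1).-tuple Gamma -> 'I_(#|Gamma| ^ n.-1)) (henc : bijective enc) :
  exists M : mlp R #|Gamma| (#|Gamma| ^ n.-1),
    forall (T : nat) (w : T.-tuple Gamma) (s : nat),
      (n.-1 <= s)%N -> (s <= T)%N ->
      forall u : (n.-1).-tuple Gamma,
        val u = take n.-1 (drop (s.+1 - n) w) ->
        mlp_eval M (l1normalize (attnA R n w s)) = onehot R (enc u).
Proof.
pose code (u : (n.-1).-tuple Gamma) := l1normalize (decimal_code R (val u)).
have code_inj : injective code.
  move=> u v /l1normalize_decimal_code_inj; rewrite !size_tuple => /(_ erefl).
  exact: val_inj.
have [M codeM] := mlp_interpolate code_inj (fun u => onehot R (enc u)).
exists M => T w s n_le_s s_le_T u window_u.
rewrite attnA_window // l1normalizeZ -?window_u ?codeM //.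
by rewrite mulr_gt0 // invr_gt0 ?exprn_gt0 ?ltr0n //; lia.
Qed.
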